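(* Let $n\ge 2$ and let $\mathrm W=\mathfrak S_n\ltimes\mathfrak X$ be the extended affine Weyl group, where $\mathfrak X$ is the free abelian group of Laurent monomials $X_1^{a_1}\cdots X_n^{a_n}$ ($a_i\in\mathbb Z$) on which $\mathfrak S_n$ acts by $wX_iw^{-1}=X_{w(i)}$. For $J,K\subseteq \mathbb I=\{s_1,\dots,s_{n-1}\}$, the sets $$\Delta_{K,J}=\{dp \mid d\in D^{\mathbb I}_{K,J},\ p\in \overrightarrow{\mathfrak P}_{d^{-1}K\cap J}\},\qquad \nabla_{K,J}=\{dp \mid d\in D^{\mathbb I}_{K,J},\ p\in \overleftarrow{\mathfrak P}_{d^{-1}K\cap J}\}$$ are each a complete set of pairwise inequivalent representatives of the double cosets $\mathrm W_K\backslash \mathrm W/\mathrm W_J$.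
   Context: $s_i$ denotes the simple transposition $(i,i+1)\in\mathfrak S_n$. For $L\subseteq\mathbb I$, $\mathrm W_L$ is the (finite) parabolic subgroup of $\mathfrak S_n\subseteq\mathrm W$ generated by $L$. $D^{\mathbb I}_{K,J}$ denotes the set of minimal-length (Coxeter length in $\mathfrak S_n$) representatives of the double cosets $\mathrm W_K\backslash\mathfrak S_n/\mathrm W_J$. For $d\in D^{\mathbb I}_{K,J}$, $d^{-1}K\cap J=\{s\in J\mid dsd^{-1}\in K\}$. For $L\subseteq\mathbb I$, a monomial $X_1^{a_1}\cdots X_n^{a_n}$ is $L$-dominant if $a_i\ge a_j$ whenever $i\le j$ lie in the same orbit of $\mathrm W_L$ on $\{1,\dots,n\}$, and $L$-antidominant if $a_i\le a_j$ for all such $i\le j$; $\overrightarrow{\mathfrak P}_L$ and $\overleftarrow{\mathfrak P}_L$ denote the sets of $L$-dominant, respectively $L$-antidominant, monomials. *)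

From HB Require Import structures.
From mathcomp Require Import all_boot all_order all_algebra all_fingroup.
Set Implicit Arguments. Unset Strict Implicit. Unset Printing Implicit Defensive.
Import GRing.Theory.

(* Conventions: permutations of 'I_n act on {1..n} = 'I_n.  MathComp's
   product satisfies (s * t)%g x = t (s x); we use [comp w v] for the
   usual composition w o v, as in the paper. *)
Definition comp n (w v : 'S_n) : 'S_n := (v * w)%g.

(* simple transposition s_i = (i, i+1), indexed by i : 'I_n.-1
   (i.e. i = 0 .. n-2 stands for s_1 .. s_{n-1}) *)
Definition stp n (i : 'I_n.-1) : 'S_n :=
  let i0 : 'I_n := widen_ord (leq_pred n) i in
  tperm i0 (insubd i0 i.+1).

Definition Wpar n (L : {set 'I_n.-1}) : {set 'S_n} :=
  <<[set stp i | i in L]>>%g.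

Definition word_prod n (t : seq 'I_n.-1) : 'S_n :=
  foldr (fun i w => comp (stp i) w) 1%g t.

(* Coxeter length comparison: len x <= len y, where len is the minimal
   length of a word in the simple transpositions *)
Definition len_le n (x y : 'S_n) : Prop :=
  forall t : seq 'I_n.-1, word_prod t = y ->
    exists t' : seq 'I_n.-1, size t' <= size t /\ word_prod t' = x.

(* d \in D^I_{K,J}: d has minimal Coxeter length in W_K d W_J *)
Definition in_D n (K J : {set 'I_n.-1}) (d : 'S_n) : Prop :=
  forall u v, u \in Wpar K -> v \in Wpar J -> len_le d (comp (comp u d) v).

(* d^{-1} K \cap J = { s in J | d s d^{-1} in K } *)
Definition dKJ n (K J : {set 'I_n.-1}) (d : 'S_n) : {set 'I_n.-1} :=
  [set j in J | comp (comp d (stp j)) (d^-1)%g \in [set stp k | k in K]].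

(* monomials X^a, a : 'I_n -> int *)
Definition mono n := {ffun 'I_n -> int}.

Definition same_orbit n (L : {set 'I_n.-1}) (i j : 'I_n) : Prop :=
  exists2 w, w \in Wpar L & w i = j.

Definition dominant n (L : {set 'I_n.-1}) (a : mono n) : Prop :=
  forall i j : 'I_n, (i <= j)%N -> same_orbit L i j -> (a j <= a i)%R.
Definition antidominant n (L : {set 'I_n.-1}) (a : mono n) : Prop :=
  forall i j : 'I_n, (i <= j)%N -> same_orbit L i j -> (a i <= a j)%R.

(* extended affine Weyl group W = S_n |x X; the pair (w, a) is w X^a *)
Definition W n := ('S_n * mono n)%type.

(* (w X^a)(v X^b) = (w o v) X^(v^{-1}.a + b), with w X_i w^{-1} = X_{w(i)} *)
Definition mulW n (x y : W n) : W n :=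
  (comp x.1 y.1, [ffun i => (x.2 (y.1 i) + y.2 i)%R]).

Definition ofS n (w : 'S_n) : W n := (w, [ffun => 0%R]).

Definition dc_equiv n (K J : {set 'I_n.-1}) (x y : W n) : Prop :=
  exists u v, [/\ u \in Wpar K, v \in Wpar J & y = mulW (mulW (ofS u) x) (ofS v)].

Definition Delta n (K J : {set 'I_n.-1}) (x : W n) : Prop :=
  in_D K J x.1 /\ dominant (dKJ K J x.1) x.2.
Definition Nabla n (K J : {set 'I_n.-1}) (x : W n) : Prop :=
  in_D K J x.1 /\ antidominant (dKJ K J x.1) x.2.

Definition complete_repr n (K J : {set 'I_n.-1}) (S : W n -> Prop) : Prop :=
  (forall x : W n, exists2 y, S y & dc_equiv K J x y) /\
  (forall y1 y2, S y1 -> S y2 -> dc_equiv K J y1 y2 -> y1 = y2).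

(* The blocks of L, the maximal intervals of {1, ..., n} joined by the s_i
   with i in L, are the orbits of W_L.  Counting lengths by inversions, d is
   minimal in W_K d W_J iff d is increasing on the blocks of J and d^-1 on
   those of K; such a d is unique in its double coset, because d(x) is the
   number of points preceding x when points are ordered first by the K-block
   of their image and then by position.  For this d, the double coset of
   d X^a contains d X^b exactly when b is obtained from a by a permutation v
   in W_J with d v d^-1 in W_K, i.e. by permuting entries inside the blocks of
   d^-1 K \cap J (the intersections of a J-block with the d-preimage of a
   K-block), all of which W_{d^-1 K \cap J} realises.  Sorting inside these
   blocks gives exactly one dominant and one antidominant monomial. *)

From mathcomp Require Import all_boot all_order all_algebra all_fingroup.
From mathcomp Require Import zify.
Import GRing.Theory Num.Theory Order.TTheory.
Set Implicit Arguments. Unset Strict Implicit. Unset Printing Implicit Defensive.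

Section SimpleTranspositions.
Variable n : nat.
Implicit Types (k l : 'I_n.-1) (w : 'S_n).

Definition lo k : 'I_n := widen_ord (leq_pred n) k.
Definition hi k : 'I_n := insubd (lo k) k.+1.

Lemma ltS_ord_pred k : k.+1 < n.
Proof. by have := ltn_ord k; case: n k. Qed.

Lemma hiE k : nat_of_ord (hi k) = k.+1.
Proof. by rewrite /hi /= val_insubd ltS_ord_pred. Qed.

Lemma stpE k : stp k = tperm (lo k) (hi k).
Proof. by []. Qed.

Lemma lo_neq_hi k : lo k != hi k.
Proof. by rewrite -val_eqE /= hiE neq_ltn ltnSn. Qed.

Lemma perm_lo_hi_eqF w k : (w (lo k) == w (hi k)) = false.
Proof. by rewrite (inj_eq perm_inj) (negbTE (lo_neq_hi k)). Qed.

Lemma val_stp k (x : 'I_n) : nat_of_ord (stp k x) =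
  if nat_of_ord x == k then k.+1
  else if nat_of_ord x == k.+1 then nat_of_ord k else nat_of_ord x.
Proof.
rewrite stpE; case: tpermP => [->|->|/eqP xk /eqP xk1]; rewrite ?hiE ?eqxx //=.
- by rewrite (gtn_eqF (ltnSn _)).
- rewrite -val_eqE /= in xk; rewrite -val_eqE /= hiE in xk1.
  by rewrite (negbTE xk) (negbTE xk1).
Qed.

Lemma stpK k : involutive (stp k).
Proof. by move=> x; rewrite stpE tpermK. Qed.

Lemma stpV k : ((stp k)^-1 = stp k)%g.
Proof. by rewrite stpE tpermV. Qed.

Lemma stp_mulgg k : (stp k * stp k = 1)%g.
Proof. by rewrite -{1}stpV mulVg. Qed.

End SimpleTranspositions.

Section Inversions.
Variable n : nat.
Implicit Types (k : 'I_n.-1) (w : 'S_n).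

Definition count_pairs (P : 'I_n -> 'I_n -> bool) : nat :=
  \sum_(x : 'I_n) \sum_(y : 'I_n) ((x < y) && P x y).

(* Relabelling by [stp k] preserves the order of every pair except [(lo k, hi k)]. *)
Lemma count_pairs_stp (P : 'I_n -> 'I_n -> bool) k :
  count_pairs (fun x y => P (stp k x) (stp k y)) + P (lo k) (hi k)
  = count_pairs P + P (hi k) (lo k).
Proof.
have stp_reindex : count_pairs (fun x y => P (stp k x) (stp k y)) =
    \sum_(x : 'I_n) \sum_(y : 'I_n) ((stp k x < stp k y) && P x y).
  rewrite /count_pairs (reindex_inj (inv_inj (stpK k))); apply: eq_bigr => x _.
  by rewrite (reindex_inj (inv_inj (stpK k))); apply: eq_bigr => y _; rewrite !stpK.
have single c (p0 : 'I_n * 'I_n) : c = \sum_(p : 'I_n * 'I_n) ((p == p0) * c).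
  by rewrite (bigD1 p0) //= eqxx mul1n big1 ?addn0 // => p /negbTE ->.
rewrite stp_reindex /count_pairs !pair_big /= (single (P (lo k) (hi k)) (lo k, hi k)).
rewrite (single (P (hi k) (lo k)) (hi k, lo k)) -!big_split /=.
apply: eq_bigr => [[x y]] _ /=.
have nlh := negbTE (lo_neq_hi k).
case: (eqVneq (x, y) (lo k, hi k)) => [[-> ->]|ne1].
  rewrite stpE tpermL tpermR /= hiE ltnNge leqnSn ltnSn /= xpair_eqE nlh /=.
  by case: (P _ _); case: (P _ _).
case: (eqVneq (x, y) (hi k, lo k)) => [[-> ->]|ne2].
  rewrite stpE tpermL tpermR /= hiE ltnSn ltnNge leqnSn /=.
  by case: (P _ _); case: (P _ _).
rewrite !mul0n !addn0; congr (_ && _).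
rewrite !xpair_eqE -!val_eqE /= hiE in ne1 ne2.
rewrite !val_stp; repeat (case: eqP => ?); apply/idP/idP => ?; lia.
Qed.

Definition ninv w : nat := count_pairs (fun x y => w y < w x).

Lemma ninv1 : ninv 1%g = 0.
Proof.
rewrite /ninv /count_pairs big1 // => x _; rewrite big1 // => y _.
by rewrite !perm1; case: ltngtP.
Qed.

Lemma ninv_stpM w k :
  ninv (stp k * w)%g + (w (hi k) < w (lo k)) = ninv w + (w (lo k) < w (hi k)).
Proof.
rewrite /ninv -(count_pairs_stp (fun x y => w y < w x)).
by congr (_ + _); apply: eq_bigr => x _; apply: eq_bigr => y _; rewrite !permM.
Qed.

Lemma ninvV w : ninv (w^-1)%g = ninv w.
Proof.
rewrite /ninv /count_pairs (reindex_inj (@perm_inj _ w)) /=.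
under eq_bigr => x _ do rewrite (reindex_inj (@perm_inj _ w)) /=.
rewrite exchange_big /=; apply: eq_bigr => x _; apply: eq_bigr => y _.
by rewrite !permK andbC.
Qed.

Lemma ninv_Mstp w k :
  ninv (w * stp k)%g + (w^-1 (hi k) < w^-1 (lo k))%g
   = ninv w + (w^-1 (lo k) < w^-1 (hi k))%g.
Proof. by rewrite -ninvV invMg stpV ninv_stpM ninvV. Qed.

Lemma ninv_word_prod (t : seq 'I_n.-1) : ninv (word_prod t) <= size t.
Proof.
elim: t => [|k t IH] /=; first by rewrite ninv1.
rewrite /comp; have := ninv_Mstp (word_prod t) k.
case: (_ < _); case: (_ < _); rewrite /= ?addn0 ?addn1; lia.
Qed.

Lemma perm_ascents_eq1 w : (forall k, w (lo k) < w (hi k)) -> w = 1%g.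
Proof.
move=> asc.
have up m (x : 'I_n) : nat_of_ord x = m -> m <= w x.
  elim: m x => [//|m IH] x xm.
  have mn : m < n.-1 by have := ltn_ord x; rewrite xm; lia.
  have -> : x = hi (Ordinal mn) by apply/val_inj; rewrite /= hiE.
  by have := IH (lo (Ordinal mn)) erefl; have := asc (Ordinal mn); lia.
have down m (x : 'I_n) : nat_of_ord x + m = n.-1 -> w x + m <= n.-1.
  elim: m x => [|m IH] x xm; first by rewrite addn0; have := ltn_ord (w x); lia.
  have xn : nat_of_ord x < n.-1 by lia.
  have -> : x = lo (Ordinal xn) by apply/val_inj.
  by have := IH (hi (Ordinal xn)); rewrite hiE /=; have := asc (Ordinal xn); lia.
apply/permP => x; apply/val_inj; rewrite perm1 /=.
by have := up _ x erefl; have := down (n.-1 - x) x; have := ltn_ord x; lia.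
Qed.

Lemma perm_descent w : w != 1%g -> exists k, w (hi k) < w (lo k).
Proof.
move=> w1; apply/existsP; apply: contraR w1 => /existsPn noDesc; apply/eqP.
by apply: perm_ascents_eq1 => k; rewrite ltn_neqAle val_eqE perm_lo_hi_eqF leqNgt noDesc.
Qed.

Lemma word_prod_ninv w : exists t, size t = ninv w /\ word_prod t = w.
Proof.
have [m] := ubnP (ninv w); elim: m w => // m IH w wm.
have [wV1|wV1] := eqVneq (w^-1)%g 1%g.
  by exists [::]; rewrite -(invgK w) wV1 invg1 ninv1.
have [k desc] := perm_descent wV1.
have := ninv_Mstp w k; rewrite desc /= => E.
have [t [st wt]] := IH (w * stp k)%g ltac:(lia).
exists (k :: t); split; first by rewrite /= st; lia.
by rewrite /= /comp wt -mulgA stp_mulgg mulg1.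
Qed.

Lemma len_leP (x y : 'S_n) : len_le x y <-> ninv x <= ninv y.
Proof.
split=> [le_xy | le_xy t yt].
  have [t [st yt]] := word_prod_ninv y.
  have [t' [st' <-]] := le_xy t yt.
  by rewrite -st (leq_trans (ninv_word_prod t')).
have [t' [st' xt']] := word_prod_ninv x.
by exists t'; rewrite st' (leq_trans le_xy) // -yt ninv_word_prod.
Qed.

End Inversions.

Section Blocks.
Variable n : nat.
Implicit Types (k l : 'I_n.-1) (L : {set 'I_n.-1}) (w : 'S_n).

Lemma ord_chain (T : Type) (R : T -> T -> Prop) (f : 'I_n -> T) :
  (forall a, R a a) -> (forall a b c, R a b -> R b c -> R a c) ->
  forall x y : 'I_n, x <= y ->
  (forall k, x <= k -> k < y -> R (f (lo k)) (f (hi k))) -> R (f x) (f y).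
Proof.
move=> Rrefl Rtrans x y xy step.
suff reach m (z : 'I_n) : nat_of_ord z = x + m -> z <= y -> R (f x) (f z).
  by apply: (reach (y - x)) => //; lia.
elim: m z => [|m IH] z zm zy.
  by have -> : z = x by apply/val_inj; rewrite /= zm addn0.
have zn : x + m < n.-1 by have := ltn_ord z; rewrite zm; lia.
have -> : z = hi (Ordinal zn) by apply/val_inj; rewrite /= hiE zm addnS.
apply: Rtrans (IH (lo (Ordinal zn)) erefl _) _; first by rewrite /=; lia.
by apply: step => /=; lia.
Qed.

(* The blocks of [L] (the orbits of [Wpar L]) are the maximal intervals
   [m, m'] with [m, ..., m' - 1] in [L]; [blk L m] numbers the block of [m]. *)
Definition nat_in L (m : nat) : bool := [exists l in L, nat_of_ord l == m].
Definition blk L (m : nat) : nat := \sum_(0 <= k < m) ~~ nat_in L k.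

Lemma nat_in_ord L k : nat_in L k = (k \in L).
Proof.
apply/existsP/idP => [[l /andP[lL /eqP/val_inj <-]] //|kL].
by exists k; rewrite kL eqxx.
Qed.

Lemma blkS L m : blk L m.+1 = blk L m + ~~ nat_in L m.
Proof. by rewrite /blk big_nat_recr. Qed.

Lemma blk_hi L k : blk L (hi k) = blk L (lo k) + (k \notin L).
Proof. by rewrite hiE blkS nat_in_ord. Qed.

Lemma blk_split L x y : x <= y -> blk L y = blk L x + \sum_(x <= k < y) ~~ nat_in L k.
Proof. by move=> xy; rewrite /blk (big_cat_nat (leq0n x) xy). Qed.

Lemma blk_mono L x y : x <= y -> blk L x <= blk L y.
Proof. by move=> xy; rewrite (blk_split L xy) leq_addr. Qed.

Lemma blk_eq_inner L a b c e : a <= b -> b <= c -> c <= e ->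
  blk L a = blk L e -> blk L b = blk L c.
Proof.
move=> ab bc ce; have := blk_mono L ab; have := blk_mono L bc; have := blk_mono L ce.
lia.
Qed.

Lemma blk_eqP L x y : x <= y ->
  blk L x = blk L y <-> (forall m, x <= m -> m < y -> nat_in L m).
Proof.
move=> xy; rewrite (blk_split L xy); split.
  move=> /eqP; rewrite -{1}[blk L x]addn0 eqn_add2l eq_sym sum_nat_seq_eq0.
  move=> /allP inL m xm my; have := inL m; rewrite mem_index_iota xm my.
  by case: (nat_in L m) => //; apply.
by move=> inL; rewrite big_nat big1 ?addn0 // => m /andP[xm my]; rewrite inL.
Qed.

Lemma blk_stp L l (x : 'I_n) : l \in L -> blk L (stp l x) = blk L x.
Proof.
move=> lL; have Hl : blk L l.+1 = blk L l by rewrite blkS nat_in_ord lL addn0.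
by rewrite val_stp; case: ifP => [/eqP ->|_] //; case: ifP => [/eqP ->|_].
Qed.

Definition blk_stab L : {set 'S_n} := [set w : 'S_n | [forall x, blk L (w x) == blk L x]].

Lemma blk_stab_group L : group_set (blk_stab L).
Proof.
apply/group_setP; split; first by rewrite inE; apply/forallP => x; rewrite perm1.
move=> u v; rewrite !inE => /forallP Hu /forallP Hv; apply/forallP => x.
by rewrite permM (eqP (Hv _)) (eqP (Hu _)).
Qed.

Lemma stp_Wpar L l : l \in L -> stp l \in Wpar L.
Proof. by move=> lL; apply/mem_gen/imset_f. Qed.

Lemma Wpar_blk L w (x : 'I_n) : w \in Wpar L -> blk L (w x) = blk L x.
Proof.
have sub : Wpar L \subset blk_stab L.
  rewrite /Wpar (gen_subG _ (Group (blk_stab_group L))); apply/subsetP.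
  by move=> _ /imsetP[l lL ->]; rewrite inE; apply/forallP => y; rewrite blk_stp.
by move=> /(subsetP sub); rewrite inE => /forallP/(_ x)/eqP.
Qed.

Lemma same_orbitE L (x y : 'I_n) : x <= y -> same_orbit L x y <-> blk L x = blk L y.
Proof.
move=> xy; split=> [[w wW <-]|]; first by rewrite Wpar_blk.
move/(blk_eqP L xy) => inL.
apply: (@ord_chain _ (same_orbit L) id) => //.
- by move=> a; exists 1%g; rewrite ?group1 ?perm1.
- move=> a b c [u uW <-] [v vW <-]; exists (u * v)%g; last by rewrite permM.
  by rewrite groupM.
- move=> k xk ky; exists (stp k); last by rewrite stpE tpermL.
  by apply: stp_Wpar; rewrite -nat_in_ord inL.
Qed.

Lemma dominantE L (a : mono n) : dominant L a <->
  (forall x y : 'I_n, x <= y -> blk L x = blk L y -> (a y <= a x)%R).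
Proof. by split=> dom x y xy /(same_orbitE L xy); apply: dom. Qed.

Lemma antidominantE L (a : mono n) : antidominant L a <->
  (forall x y : 'I_n, x <= y -> blk L x = blk L y -> (a x <= a y)%R).
Proof. by split=> dom x y xy /(same_orbitE L xy); apply: dom. Qed.

Lemma blk_ascents_mono L w (x y : 'I_n) :
  (forall l, l \in L -> w (lo l) < w (hi l)) ->
  x <= y -> blk L x = blk L y -> w x <= w y.
Proof.
move=> asc xy /(blk_eqP L xy) inL.
apply: (@ord_chain nat leq (fun z => nat_of_ord (w z))) => //.
- by move=> a b c; apply: leq_trans.
- by move=> k xk ky; apply/ltnW/asc; rewrite -nat_in_ord inL.
Qed.

Lemma card_ord_lt m : m <= n -> #|[set y : 'I_n | y < m]| = m.
Proof.
move=> mn; have -> : [set y : 'I_n | y < m] = widen_ord mn @: [set: 'I_m].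
  apply/setP => y; rewrite inE; apply/idP/imsetP => [ym|[i _ ->] /=]; last exact: ltn_ord.
  by exists (Ordinal ym) => //; apply: val_inj.
by rewrite card_imset ?cardsT ?card_ord // => i j /(congr1 val) ij; exact: val_inj.
Qed.

(* Comparing the level sets [{y | t <= b y}] and their [v]-preimages inside a
   block: one contains the other, and they have the same size. *)
Lemma dominant_perm_fix (g : 'I_n -> nat) (v : 'S_n) (b : 'I_n -> int) :
  (forall z, g (v z) = g z) ->
  (forall x y : 'I_n, x <= y -> g x = g y -> (b y <= b x)%R) ->
  (forall x y : 'I_n, x <= y -> g x = g y -> (b (v y) <= b (v x))%R) ->
  forall z, b (v z) = b z.
Proof.
move=> gv dom domv z.
pose S t := [set y | (g y == g z) && (t <= b y)%R].
pose S' t := [set y | (g y == g z) && (t <= b (v y))%R].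
have SS t : S' t = S t.
  have cd : #|S' t| = #|S t|.
    suff -> : S' t = v @^-1: S t by rewrite card_preimset //; exact: perm_inj.
    by apply/setP => y; rewrite !inE gv.
  have [sub|] := boolP (S t \subset S' t).
    by apply/eqP; rewrite eq_sym eqEcard sub cd leqnn.
  case/subsetPn => y; rewrite !inE => /andP[/eqP gy ty] /negP yS'.
  apply/eqP; rewrite eqEcard cd leqnn andbT; apply/subsetP => x.
  rewrite !inE => /andP[/eqP gx tx]; rewrite gx eqxx /=.
  case: (leqP y x) => [yx|xy].
    by case: yS'; rewrite gy eqxx /=; apply: le_trans tx _; apply: domv; rewrite ?gy ?gx.
  by apply: le_trans ty _; apply: dom; [exact: ltnW | rewrite gy gx].
apply: le_anti; apply/andP; split.
  have : z \in S' (b (v z)) by rewrite inE eqxx lexx.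
  by rewrite SS inE => /andP[].
have : z \in S (b z) by rewrite inE eqxx lexx.
by rewrite -SS inE => /andP[].
Qed.

(* Bubble sort inside the blocks: adjacent transpositions in [L] strictly
   decrease the number of ascending pairs of [a]. *)
Lemma dominant_sort_exists L (a : 'I_n -> int) : exists2 v, v \in Wpar L &
  forall x y : 'I_n, x <= y -> blk L x = blk L y -> (a (v y) <= a (v x))%R.
Proof.
pose asc (v : 'S_n) := count_pairs (fun x y => a (v x) < a (v y))%R.
suff sort m (v : 'S_n) : asc v < m -> v \in Wpar L -> exists2 v', v' \in Wpar L &
    forall x y : 'I_n, x <= y -> blk L x = blk L y -> (a (v' y) <= a (v' x))%R.
  exact: (sort _ 1%g (ltnSn _) (group1 _)).
elim: m v => // m IH v vm vL.
have [/existsP[l /andP[lL lt]]|/existsPn sorted] :=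
  boolP [exists l in L, a (v (lo l)) < a (v (hi l))]%R.
  apply: (IH (stp l * v)%g); last by rewrite groupM // stp_Wpar.
  have -> : asc (stp l * v)%g =
      count_pairs (fun x y => a (v (stp l x)) < a (v (stp l y)))%R.
    by apply: eq_bigr => x _; apply: eq_bigr => y _; rewrite !permM.
  have := count_pairs_stp (fun x y => a (v x) < a (v y))%R l.
  rewrite lt (lt_gtF lt) /=; rewrite /asc in vm; lia.
exists v => // x y xy /(blk_eqP L xy) inL.
apply: (@ord_chain int (fun p q => q <= p)%R (fun z => a (v z))) => //.
- by move=> p q r pq qr; apply: le_trans qr pq.
- by move=> k xk ky; have := sorted k; rewrite -nat_in_ord inL //= -leNgt.
Qed.

End Blocks.

Section MinimalRepresentatives.
Variable n : nat.
Variables K J : {set 'I_n.-1}.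
Implicit Types (d u v : 'S_n).

(* [d] has no right descent in [J] and no left descent in [K]; equivalently,
   [d] is increasing on the blocks of [J] and [d^-1] on those of [K]. *)
Definition minimal_KJ d : Prop :=
  (forall j, j \in J -> d (lo j) < d (hi j)) /\
  (forall k, k \in K -> (d^-1)%g (lo k) < (d^-1)%g (hi k)).

Lemma in_D_minimal d : in_D K J d -> minimal_KJ d.
Proof.
move=> dmin; split=> [j jJ | k kK]; rewrite ltn_neqAle val_eqE perm_lo_hi_eqF leqNgt /=.
  apply/negP => desc; have := ninv_stpM d j; rewrite desc ltnNge (ltnW desc) /=.
  have /len_leP := dmin 1%g (stp j) (group1 _) (stp_Wpar jJ).
  by rewrite /comp mulg1; lia.
apply/negP => desc; have := ninv_Mstp d k; rewrite desc ltnNge (ltnW desc) /=.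
have /len_leP := dmin (stp k) 1%g (stp_Wpar kK) (group1 _).
by rewrite /comp mul1g; lia.
Qed.

Lemma compE u d v (z : 'I_n) : comp (comp u d) v z = u (d (v z)).
Proof. by rewrite /comp !permM. Qed.

(* Ordering points by the [K]-block of their image, then by position, [d x] is
   the rank of [x]; so a minimal [d] is determined by [x |-> blk K (d x)]. *)
Lemma minimal_val_card d (x : 'I_n) : minimal_KJ d ->
  nat_of_ord (d x) = #|[set z : 'I_n | (blk K (d z) < blk K (d x)) ||
                         ((blk K (d z) == blk K (d x)) && (z < x))]|.
Proof.
move=> [_ ascK].
have monoK (y y' : 'I_n) : y <= y' -> blk K y = blk K y' -> (d^-1)%g y <= (d^-1)%g y'.
  exact: blk_ascents_mono.
suff -> : [set z : 'I_n | (blk K (d z) < blk K (d x)) ||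
                         ((blk K (d z) == blk K (d x)) && (z < x))]
          = d @^-1: [set y : 'I_n | y < d x].
  by rewrite card_preimset ?card_ord_lt //; [exact: ltnW | exact: perm_inj].
apply/setP => z; rewrite !inE; apply/idP/idP => [/orP[lt|/andP[/eqP eq zx]]|lt].
- by rewrite ltnNge; apply/negP => /(blk_mono K); lia.
- by rewrite ltnNge; apply/negP => le; have := monoK _ _ le (esym eq); rewrite !permK; lia.
have := blk_mono K (ltnW lt); rewrite leq_eqVlt => /orP[/eqP eq|->] //.
rewrite eq eqxx /=; have := monoK _ _ (ltnW lt) eq; rewrite !permK leq_eqVlt.
by case/orP=> [/eqP/val_inj e|->]; [move: lt; rewrite e ltnn | rewrite orbT].
Qed.

Lemma minimal_dc_uniq d d' u v : minimal_KJ d -> minimal_KJ d' ->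
  u \in Wpar K -> v \in Wpar J -> d' = comp (comp u d) v -> d = d'.
Proof.
move=> md md' uK vJ dd'.
have blk_d' z : blk K (d' z) = blk K (d (v z)) by rewrite dd' compE Wpar_blk.
(* [v] permutes each [J]-block, on which [blk K \o d] and
   [blk K \o d' = blk K \o d \o v] are both nondecreasing. *)
have blk_dv z : blk K (d (v z)) = blk K (d z).
  suff /oppr_inj[] : (- (blk K (d (v z)))%:Z = - (blk K (d z))%:Z)%R by [].
  apply: (@dominant_perm_fix _ (blk J) v (fun z => - (blk K (d z))%:Z)%R)
    => [w|a b ab e|a b ab e].
  - by rewrite Wpar_blk.
  - by rewrite lerN2 lez_nat blk_mono // (blk_ascents_mono md.1).
  - by rewrite lerN2 lez_nat -!blk_d' blk_mono // (blk_ascents_mono md'.1).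
apply/permP => x; apply/val_inj.
rewrite /= (minimal_val_card x md) (minimal_val_card x md'); apply: eq_card => z.
by rewrite !inE !blk_d' !blk_dv.
Qed.

Lemma dKJE d j : (j \in dKJ K J d) =
  (j \in J) && (tperm (d (lo j)) (d (hi j)) \in [set stp k | k in K]).
Proof. by rewrite inE -tpermJ. Qed.

Lemma dKJ_blk d j : j \in dKJ K J d ->
  blk J (lo j) = blk J (hi j) /\ blk K (d (lo j)) = blk K (d (hi j)).
Proof.
rewrite dKJE => /andP[jJ /imsetP[k kK e]]; split; first by rewrite blk_hi jJ addn0.
have : tperm (d (lo j)) (d (hi j)) (d (lo j)) = stp k (d (lo j)) by rewrite e.
by rewrite tpermL => ->; rewrite blk_stp.
Qed.

(* Between [d (lo j)] and [d (hi j)] there is no room: a point in between would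
   share their [K]-block, and [d^-1] would have to send it strictly between
   [lo j] and [hi j]. *)
Lemma minimal_hi_succ d j : minimal_KJ d -> j \in J ->
  blk K (d (lo j)) = blk K (d (hi j)) -> nat_of_ord (d (hi j)) = (d (lo j)).+1.
Proof.
move=> md jJ eK; have lt := md.1 j jJ.
apply/eqP; rewrite eqn_leq lt andbT leqNgt; apply/negP => lt2.
have mn : (d (lo j)).+1 < n by have := ltn_ord (d (hi j)); lia.
pose y : 'I_n := Ordinal mn.
have l1 : d (lo j) <= y by rewrite /=; lia.
have l2 : y <= d (hi j) by rewrite /=; lia.
have e1 : blk K (d (lo j)) = blk K y by apply: (blk_eq_inner (leqnn _) l1 l2 eK).
have e2 : blk K y = blk K (d (hi j)) by rewrite -e1.
have := blk_ascents_mono md.2 l1 e1; have := blk_ascents_mono md.2 l2 e2; rewrite !permK.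
have : (d^-1)%g y != lo j.
  by apply/eqP => e; have /(congr1 val) /= := permKV d y; rewrite e; lia.
have : (d^-1)%g y != hi j.
  by apply/eqP => e; have /(congr1 val) /= := permKV d y; rewrite e; lia.
by rewrite -!val_eqE /= hiE; lia.
Qed.

Lemma blk_dKJ_step d j : minimal_KJ d -> j \in J ->
  blk K (d (lo j)) = blk K (d (hi j)) -> j \in dKJ K J d.
Proof.
move=> md jJ eK; rewrite dKJE jJ /=.
have succ := minimal_hi_succ md jJ eK.
have kn : nat_of_ord (d (lo j)) < n.-1 by have := ltn_ord (d (hi j)); lia.
pose k : 'I_n.-1 := Ordinal kn.
have ek : lo k = d (lo j) by apply/val_inj.
have ek' : hi k = d (hi j) by apply/val_inj; rewrite /= hiE succ.
apply/imsetP; exists k; last by rewrite stpE ek ek'.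
by have := blk_hi K k; rewrite ek ek' eK; case: (k \in K) => //=; lia.
Qed.

Lemma dKJ_blk_eq d (x y : 'I_n) : x <= y ->
  blk (dKJ K J d) x = blk (dKJ K J d) y ->
  blk J x = blk J y /\ blk K (d x) = blk K (d y).
Proof.
move=> xy /(blk_eqP _ xy) inL.
suff [] : (blk J x, blk K (d x)) = (blk J y, blk K (d y)) by [].
apply: (@ord_chain _ _ eq (fun z => (blk J z, blk K (d z)))) => //.
  by move=> a b c -> ->.
move=> k xk ky; have kL : k \in dKJ K J d by rewrite -nat_in_ord inL.
by have [-> ->] := dKJ_blk kL.
Qed.

Lemma blk_dKJ_eq d (x y : 'I_n) : minimal_KJ d -> x <= y ->
  blk J x = blk J y -> blk K (d x) = blk K (d y) ->
  blk (dKJ K J d) x = blk (dKJ K J d) y.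
Proof.
move=> md xy eJ eK; apply/(blk_eqP _ xy) => m xm my.
have mn : m < n.-1 by have := ltn_ord y; lia.
pose k : 'I_n.-1 := Ordinal mn; rewrite -[m]/(nat_of_ord k) nat_in_ord.
have xlo : x <= lo k by [].
have lohi : lo k <= hi k by rewrite hiE.
have hiy : hi k <= y by rewrite hiE.
have kJ : k \in J.
  by have := blk_eq_inner xlo lohi hiy eJ; rewrite blk_hi; case: (k \in J) => //=; lia.
apply: (blk_dKJ_step md kJ); apply: (blk_eq_inner _ _ _ eK).
- apply: (blk_ascents_mono md.1 xlo).
  by apply: (blk_eq_inner _ xlo _ eJ); rewrite // (leq_trans lohi hiy).
- exact/ltnW/(md.1 k kJ).
- apply: (blk_ascents_mono md.1 hiy).
  by apply: (blk_eq_inner _ hiy _ eJ); rewrite // (leq_trans xlo lohi).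
Qed.

Lemma blk_dKJE d (x y : 'I_n) : minimal_KJ d ->
  blk (dKJ K J d) x = blk (dKJ K J d) y <->
  blk J x = blk J y /\ blk K (d x) = blk K (d y).
Proof.
move=> md; have [xy|/ltnW yx] := leqP x y.
  by split=> [|[]]; [exact: dKJ_blk_eq | exact: blk_dKJ_eq].
split=> [/esym/(dKJ_blk_eq yx)[-> ->] // | [eJ eK]].
exact/esym/blk_dKJ_eq.
Qed.

Lemma Wpar_dKJ d v : v \in Wpar (dKJ K J d) -> v \in Wpar J /\ (v ^ d)%g \in Wpar K.
Proof.
move=> vL; split.
  apply: subsetP vL; apply/genS/subsetP => _ /imsetP[j jL ->].
  by apply: imset_f; move: jL; rewrite inE => /andP[].
have sub : (Wpar (dKJ K J d) :^ d)%g \subset Wpar K.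
  rewrite /Wpar -genJ; apply/genS/subsetP => z; rewrite mem_conjg => /imsetP[j jL e].
  move: jL; rewrite inE => /andP[_ jK]; rewrite -[z](conjgKV d) e; exact: jK.
by apply: (subsetP sub); rewrite memJ_conjg.
Qed.

End MinimalRepresentatives.

Section DoubleCosets.
Variable n : nat.
Variables K J : {set 'I_n.-1}.

Lemma dc_equivE (x y : W n) : dc_equiv K J x y <->
  exists u v, [/\ u \in Wpar K, v \in Wpar J, y.1 = comp (comp u x.1) v
                & forall i, y.2 i = x.2 (v i)].
Proof.
split=> [[u [v [uK vJ ->]]] | [u [v [uK vJ e1 e2]]]].
  by exists u, v; split => // i; rewrite /mulW /ofS /= !ffunE /= add0r addr0.
exists u, v; split => //; case: y e1 e2 => y1 y2 /= -> e2.
by congr (_, _); apply/ffunP => i; rewrite /mulW /ofS /= !ffunE /= add0r addr0 e2.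
Qed.

Lemma in_D_exists (w : 'S_n) : exists2 d, in_D K J d &
  exists u v, [/\ u \in Wpar K, v \in Wpar J & d = comp (comp u w) v].
Proof.
pose DC := [set comp (comp u w) v | u in Wpar K, v in Wpar J].
have wDC : w \in DC.
  by apply/imset2P; exists 1%g 1%g; rewrite ?group1 // /comp mulg1 mul1g.
have [_ /imset2P[u v uK vJ ->] dmin] := arg_minnP (@ninv n) wDC.
exists (comp (comp u w) v); last by exists u, v.
move=> u' v' u'K v'J; apply/len_leP/dmin.
apply/imset2P; exists (u * u')%g (v' * v)%g; rewrite ?groupM //.
by rewrite /comp !mulgA.
Qed.

(* Take [d] minimal in [W_K w W_J], then sort the exponents inside the blocks
   of [d^-1 K \cap J] by some [v]; [d v = (d v d^-1) d] with [d v d^-1] in [W_K]. *)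
Lemma Delta_exists (x : W n) : exists2 y, Delta K J y & dc_equiv K J x y.
Proof.
case: x => w a; have [d dD [u0 [v0 [u0K v0J ed]]]] := in_D_exists w.
have [v vL dom] := dominant_sort_exists (dKJ K J d) (fun i => a (v0 i)).
have [vJ vK] := Wpar_dKJ vL.
exists (d, [ffun i => a (v0 (v i))]).
  by split => //; apply/dominantE => x y xy e; rewrite !ffunE; exact: dom.
apply/dc_equivE; exists (u0 * (v ^ d)^-1)%g, (comp v0 v); split => //=.
- by rewrite groupM // groupV.
- by rewrite /comp groupM.
- have shift c : comp (comp (u0 * c) w) (comp v0 v) = (v * d * c)%g.
    by rewrite ed /comp !mulgA.
  by rewrite shift /conjg !invMg invgK !mulgA mulgK mulgV mul1g.
- by move=> i; rewrite ffunE /comp permM.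
Qed.

(* Both representatives share the same minimal [d], and the permutation [v]
   relating their exponents fixes every block of [d^-1 K \cap J]. *)
Lemma Delta_uniq (y1 y2 : W n) : Delta K J y1 -> Delta K J y2 ->
  dc_equiv K J y1 y2 -> y1 = y2.
Proof.
case: y1 y2 => [d1 a1] [d2 a2] [/= D1 dom1] [/= D2 dom2].
move=> /dc_equivE[u [v [uK vJ /= e1 e2]]].
have md1 := in_D_minimal D1.
have ed := minimal_dc_uniq md1 (in_D_minimal D2) uK vJ e1.
rewrite -ed in e1 dom2 *.
have vL z : blk (dKJ K J d1) (v z) = blk (dKJ K J d1) z.
  apply/blk_dKJE => //; rewrite Wpar_blk //; split => //.
  by rewrite [in RHS]e1 compE (Wpar_blk _ uK).
have fix_a z : a1 (v z) = a1 z.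
  apply: (dominant_perm_fix vL); first exact/dominantE.
  by move=> x y xy e; rewrite -!e2; move/dominantE: dom2; apply.
by congr (_, _); apply/ffunP => z; rewrite e2 fix_a.
Qed.

Definition negW (x : W n) : W n := (x.1, [ffun i => - x.2 i]%R).

Lemma negWK : involutive negW.
Proof. by case=> d a; congr (_, _); apply/ffunP => i; rewrite !ffunE opprK. Qed.

Lemma dc_equiv_negW x y : dc_equiv K J x y -> dc_equiv K J (negW x) (negW y).
Proof.
move=> /dc_equivE[u [v [uK vJ e1 e2]]]; apply/dc_equivE; exists u, v.
by split => // i; rewrite !ffunE e2.
Qed.

Lemma Nabla_negW x : Nabla K J x <-> Delta K J (negW x).
Proof.
case: x => d a; rewrite /Nabla /Delta /=.
split=> -[D H]; split=> //.
  move/antidominantE: H => H; apply/dominantE => x y xy e.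
  by rewrite !ffunE lerN2 H.
move/dominantE: H => H; apply/antidominantE => x y xy e.
by have := H x y xy e; rewrite !ffunE lerN2.
Qed.

Lemma Delta_repr : complete_repr K J (Delta K J).
Proof. by split; [exact: Delta_exists | exact: Delta_uniq]. Qed.

Lemma Nabla_repr : complete_repr K J (Nabla K J).
Proof.
split=> [x | y1 y2 /Nabla_negW N1 /Nabla_negW N2 /dc_equiv_negW e].
  have [y Dy e] := Delta_exists (negW x).
  exists (negW y); first by apply/Nabla_negW; rewrite negWK.
  by rewrite -(negWK x); apply: dc_equiv_negW.
by rewrite -(negWK y1) (Delta_uniq N1 N2 e) negWK.
Qed.

End DoubleCosets.

Theorem proposition2p3 (n : nat) (hn : 2 <= n) (K J : {set 'I_n.-1}) :
  complete_repr K J (Delta K J) /\ complete_repr K J (Nabla K J).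
Proof. by split; [exact: Delta_repr | exact: Nabla_repr]. Qed.
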